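(* Let $A\in\mathbb{R}^{n\times d}$, $S\in\mathbb{R}^{d\times m}$, $\lambda>0$, and let $f:\mathbb{R}^n\to\mathbb{R}$ be convex and differentiable with $\mu$-Lipschitz gradient. Let $x^*$ be the unique minimizer of $x\mapsto f(Ax)+\frac{\lambda}{2}\|x\|_2^2$ over $\mathbb{R}^d$, let $\alpha^*$ be any minimizer of $\alpha\mapsto f(AS\alpha)+\frac{\lambda}{2}\|S\alpha\|_2^2$ over $\mathbb{R}^m$, and set $\widetilde{x}=-\frac{1}{\lambda}A^\top\nabla f(AS\alpha^* )$. If $\lambda\ge 2\mu Z_f^2$, then $$\|\widetilde{x}-x^*\|_2\le\sqrt{\frac{\mu}{2\lambda}}\,Z_f\,\|x^*\|_2,$$ and consequently $$\|\widetilde{x}-x^*\|_2\le\sqrt{\frac{\mu}{2\lambda}}\,\|P_S^\perp A^\top\|_2\,\|x^*\|_2 .$$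
   Context: $f^*(z)=\sup_{w}\{w^\top z-f(w)\}$ is the Fenchel conjugate of $f$, with domain $\mathrm{dom} f^*=\{z: f^*(z)<+\infty\}$. $z^*=\nabla f(Ax^* )$ is the (unique) solution of the dual problem $\max_z -f^*(z)-\frac{1}{2\lambda}\|A^\top z\|_2^2$. $P_S=S(S^\top S)^\dagger S^\top$ is the orthogonal projector onto $\mathrm{range}(S)$ and $P_S^\perp=I_d-P_S$. The quantity $Z_f=Z_f(A,S)$ is defined by $$Z_f(A,S)=\sup_{\Delta\in(\mathrm{dom} f^*-z^* ),\,\Delta\neq 0}\left(\frac{\Delta^\top A P_S^\perp A^\top\Delta}{\|\Delta\|_2^2}\right)^{1/2}.$$ $\|\cdot\|_2$ on matrices is the spectral norm. *)

From HB Require Import structures.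
From Stdlib Require Import Reals Lra Psatz ClassicalEpsilon FunctionalExtensionality.
From mathcomp Require Import all_boot all_order all_algebra.
Set Implicit Arguments. Unset Strict Implicit. Unset Printing Implicit Defensive.
Import Order.TTheory GRing.Theory Num.Theory.
Local Open Scope ring_scope.

Definition Reqb (x y : R) : bool := if Req_EM_T x y then true else false.
Lemma ReqP : Equality.axiom Reqb.
Proof. move=> x y; rewrite /Reqb; case: Req_EM_T => h; constructor => //. Qed.
HB.instance Definition _ := hasDecEq.Build R ReqP.

Definition Rfind (P : pred R) (n : nat) : option R :=
  match excluded_middle_informative (exists x, P x) with
  | left h => Some (proj1_sig (constructive_indefinite_description _ h))
  | right _ => None end.
Lemma Rfind_correct P n x : Rfind P n = Some x -> P x.
Proof. rewrite /Rfind; case: excluded_middle_informative => // h [<-].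
exact: proj2_sig (constructive_indefinite_description _ h). Qed.
Lemma Rfind_complete (P : pred R) : (exists x, P x) -> exists n, Rfind P n.
Proof. move=> h; exists 0%N; rewrite /Rfind; case: excluded_middle_informative => //. Qed.
Lemma Rfind_ext (P Q : pred R) : P =1 Q -> Rfind P =1 Rfind Q.
Proof. move=> h; have -> : P = Q by apply: functional_extensionality. by []. Qed.
HB.instance Definition _ := hasChoice.Build R Rfind_correct Rfind_complete Rfind_ext.

Lemma RaddA : forall x y z : R, Rplus x (Rplus y z) = Rplus (Rplus x y) z. Proof. move=> *; lra. Qed.
Lemma RaddC : forall x y : R, Rplus x y = Rplus y x. Proof. move=> *; lra. Qed.
Lemma Radd0 : forall x : R, Rplus (IZR Z0) x = x. Proof. move=> *; lra. Qed.
Lemma RaddN : forall x : R, Rplus (Ropp x) x = (IZR Z0). Proof. move=> *; lra. Qed.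
HB.instance Definition _ := GRing.isZmodule.Build R RaddA RaddC Radd0 RaddN.
Lemma RmulA : forall x y z : R, Rmult x (Rmult y z) = Rmult (Rmult x y) z. Proof. move=> *; ring. Qed.
Lemma RmulC : forall x y : R, Rmult x y = Rmult y x. Proof. move=> *; ring. Qed.
Lemma Rmul1 : forall x : R, Rmult (IZR (Zpos xH)) x = x. Proof. move=> *; ring. Qed.
Lemma RmulDl : forall x y z : R, Rmult (Rplus x y) z = Rplus (Rmult x z) (Rmult y z). Proof. move=> *; ring. Qed.
Lemma R1neq0 : ((IZR (Zpos xH)) != (IZR Z0) :> R). Proof. apply/eqP; lra. Qed.
HB.instance Definition _ := GRing.Zmodule_isComNzRing.Build R RmulA RmulC Rmul1 RmulDl R1neq0.
Definition Rinvx (x : R) : R := if Reqb x (IZR Z0) then (IZR Z0) else Rinv x.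
Lemma RmulVf (x : R) : x != 0 -> Rinvx x * x = 1.
Proof. move/eqP=> h; rewrite /Rinvx; case: ReqP => // _; exact: Rinv_l. Qed.
Lemma Rinv0 : Rinvx (0 : R) = 0. Proof. by rewrite /Rinvx; case: ReqP. Qed.
HB.instance Definition _ := GRing.ComNzRing_isField.Build R RmulVf Rinv0.

Definition Rleb (x y : R) : bool := if Rle_dec x y then true else false.
Definition Rltb (x y : R) : bool := if Rlt_dec x y then true else false.
Lemma RlebP x y : reflect (Rle x y) (Rleb x y).
Proof. rewrite /Rleb; case: Rle_dec => h; constructor => //. Qed.
Lemma RltbP x y : reflect (Rlt x y) (Rltb x y).
Proof. rewrite /Rltb; case: Rlt_dec => h; constructor => //. Qed.
Lemma RaddE (x y : R) : x + y = Rplus x y. Proof. by []. Qed.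
Lemma RmulE (x y : R) : x * y = Rmult x y. Proof. by []. Qed.
Lemma RoppE (x : R) : - x = Ropp x. Proof. by []. Qed.
Lemma R0E : (0 : R) = IZR Z0. Proof. by []. Qed.
Lemma Rle0_add (x y : R) : Rleb 0 x -> Rleb 0 y -> Rleb 0 (x + y).
Proof. move=> /RlebP h1 /RlebP h2; apply/RlebP; change (Rle (IZR Z0) (Rplus x y)); change (Rle (IZR Z0) x) in h1; change (Rle (IZR Z0) y) in h2; lra. Qed.
Lemma Rle0_mul (x y : R) : Rleb 0 x -> Rleb 0 y -> Rleb 0 (x * y).
Proof. move=> /RlebP h1 /RlebP h2; apply/RlebP; change (Rle (IZR Z0) (Rmult x y)); change (Rle (IZR Z0) x) in h1; change (Rle (IZR Z0) y) in h2; nra. Qed.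
Lemma Rle0_anti (x : R) : Rleb 0 x -> Rleb x 0 -> x = 0.
Proof. move=> /RlebP ? /RlebP ?; apply: Rle_antisym => //. Qed.
Lemma Rsub_ge0 (x y : R) : Rleb 0 (y - x) = Rleb x y.
Proof. apply/RlebP/RlebP => h.
- change (Rle (IZR Z0) (Rplus y (Ropp x))) in h; lra.
- change (Rle (IZR Z0) (Rplus y (Ropp x))); lra. Qed.
Lemma Rle0_total (x : R) : Rleb 0 x || Rleb x 0.
Proof. case: (RlebP 0 x) => //= hn; apply/RlebP; change (Rle x (IZR Z0)); change (~ Rle (IZR Z0) x) in hn; lra. Qed.
Lemma RnormN (x : R) : Rabs (- x) = Rabs x. Proof. exact: Rabs_Ropp. Qed.
Lemma Rge0_norm (x : R) : Rleb 0 x -> Rabs x = x.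
Proof. move=> /RlebP ?; exact: Rabs_pos_eq. Qed.
Lemma Rlt_def (x y : R) : Rltb x y = (y != x) && Rleb x y.
Proof. apply/RltbP/andP => [h|[/eqP h1 /RlebP h2]]; last by lra.
split; [apply/eqP; lra | apply/RlebP; lra]. Qed.
HB.instance Definition _ := Num.IntegralDomain_isLeReal.Build R
  Rle0_add Rle0_mul Rle0_anti Rsub_ge0 Rle0_total RnormN Rge0_norm Rlt_def.

Definition dotv {k : nat} (u v : 'cV[R]_k) : R := (u^T *m v) 0 0.
Definition norm2 {k : nat} (v : 'cV[R]_k) : R := sqrt (\sum_(i < k) (v i 0) ^+ 2).

Definition convex_fun {k : nat} (f : 'cV[R]_k -> R) : Prop :=
  forall (x y : 'cV[R]_k) (t : R), 0 <= t -> t <= 1 ->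
    f (t *: x + (1 - t) *: y) <= t * f x + (1 - t) * f y.

Definition is_gradient {k : nat} (f : 'cV[R]_k -> R) (g : 'cV[R]_k -> 'cV[R]_k) : Prop :=
  forall x : 'cV[R]_k, forall eps : R, 0 < eps -> exists delta : R, 0 < delta /\
    forall h : 'cV[R]_k, norm2 h < delta ->
      `| f (x + h) - f x - dotv (g x) h | <= eps * norm2 h.

Definition lipschitz {k : nat} (g : 'cV[R]_k -> 'cV[R]_k) (mu : R) : Prop :=
  forall x y : 'cV[R]_k, norm2 (g x - g y) <= mu * norm2 (x - y).

(* z belongs to dom f^*, i.e. f-conjugate(z) = sup_w (w^T z - f w) < +oo. *)
Definition in_dom_conj {k : nat} (f : 'cV[R]_k -> R) (z : 'cV[R]_k) : Prop :=
  exists M : R, forall w : 'cV[R]_k, dotv w z - f w <= M.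

Definition is_sup (E : R -> Prop) (s : R) : Prop :=
  (forall r, E r -> r <= s) /\ (forall b, (forall r, E r -> r <= b) -> s <= b).

Definition is_pinv {p q : nat} (M : 'M[R]_(p, q)) (X : 'M[R]_(q, p)) : Prop :=
  [/\ M *m X *m M = M, X *m M *m X = X, (M *m X)^T = M *m X & (X *m M)^T = X *m M].
Definition pinv {p q : nat} (M : 'M[R]_(p, q)) : 'M[R]_(q, p) :=
  epsilon (inhabits 0) (is_pinv M).

Definition projS {d m : nat} (S : 'M[R]_(d, m)) : 'M[R]_d :=
  S *m pinv (S^T *m S) *m S^T.
Definition projS_perp {d m : nat} (S : 'M[R]_(d, m)) : 'M[R]_d := 1%:M - projS S.

(* The set whose supremum is Z_f(A,S), with zstar = grad f (A xstar).
   0 is added so that the supremum over an empty index set is 0. *)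
Definition Zf_set {n d m : nat} (f : 'cV[R]_n -> R) (A : 'M[R]_(n, d))
    (S : 'M[R]_(d, m)) (zstar : 'cV[R]_n) : R -> Prop :=
  fun r => r = 0 \/ exists Delta : 'cV[R]_n,
    in_dom_conj f (zstar + Delta) /\ Delta != 0 /\
    r = sqrt (((Delta^T *m A *m projS_perp S *m A^T *m Delta) 0 0) / norm2 Delta ^+ 2).

(* Spectral (operator 2-)norm: sup_{v <> 0} ||M v|| / ||v|| (0 if q = 0). *)
Definition spec_norm_set {p q : nat} (M : 'M[R]_(p, q)) : R -> Prop :=
  fun r => r = 0 \/ exists v : 'cV[R]_q, v != 0 /\ r = norm2 (M *m v) / norm2 v.

From HB Require Import structures.
From Stdlib Require Import Reals ClassicalEpsilon.
From mathcomp Require Import all_boot all_order all_algebra.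
From mathcomp Require Import ring lra.
Import Order.TTheory GRing.Theory Num.Theory.
Set Implicit Arguments. Unset Strict Implicit. Unset Printing Implicit Defensive.
Local Open Scope ring_scope.

(* Write z* = grad f (A x* ), zt = grad f (A S alpha* ), Delta = zt - z*,
   u = A^T Delta, P = P_S and Q = P_S^perp.  Both optimisation problems are
   instances of min_y f (K y) + lam/2 |L y|^2, whose minimisers satisfy
   K^T grad f (K y) + lam L^T L y = 0.  This gives x* = - A^T z* / lam, hence
   xtilde - x* = - u / lam, and S^T xtilde = S^T S alpha*, hence
   P xtilde = S alpha*, so that S alpha* - x* = P (xtilde - x* ) - Q x*.
   Co-coercivity of grad f between A x* and A S alpha* then reads
     |Delta|^2 <= mu ( (|Q u|^2 - |u|^2) / lam - <Q u, x*> ),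
   and with |Q u| <= Z_f |Delta| (zt lies in dom f^* ), Cauchy-Schwarz and
   Young's inequality one gets |u|^2 / lam^2 <= mu Z_f^2 |x*|^2 / (2 lam) as
   soon as 2 mu Z_f^2 <= lam.  Finally Z_f <= |Q A^T|_2. *)

Lemma sqrt_ge0 (x : R) : 0 <= sqrt x.
Proof. apply/RlebP; exact: sqrt_pos. Qed.

Lemma sqrtK2 (x : R) : 0 <= x -> sqrt x ^+ 2 = x.
Proof. move=> /RlebP h; rewrite expr2; exact: sqrt_sqrt. Qed.

Lemma sqrt_sq (x : R) : 0 <= x -> sqrt (x ^+ 2) = x.
Proof. move=> /RlebP h; rewrite expr2; exact: sqrt_square. Qed.

Lemma sqrt_eq0 (x : R) : 0 <= x -> sqrt x = 0 -> x = 0.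
Proof. by move=> x0 sx0; rewrite -(sqrtK2 x0) sx0 expr0n. Qed.

Lemma RinvE (x : R) : x != 0 -> x^-1 = Rinv x.
Proof. by move=> /eqP x0; rewrite /GRing.inv /= /Rinvx; case: ReqP. Qed.

Lemma INR_natr (n : nat) : INR n = n%:R.
Proof. by elim: n => [|n IH] //; rewrite S_INR IH -natr1. Qed.

Lemma sqrt_ratio_sq (a b : R) : 0 <= a -> 0 < b -> sqrt (a / (2 * b)) ^+ 2 = a / (2 * b).
Proof.
move=> a0 b0; have two : IZR 2 = 2%:R :> R by rewrite -INR_natr (INR_IZR_INZ 2).
rewrite /Rdiv -RinvE; last by rewrite two mulf_neq0 // ?gt_eqF // ltr0n.
by rewrite two sqrtK2 // divr_ge0 // mulr_ge0 // ?ler0n // ltW.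
Qed.

Lemma le_of_forall_inv_nat (a b c : R) :
  (forall N : nat, (0 < N)%N -> a <= b + c / N%:R) -> a <= b.
Proof.
move=> H; have [c0|c0] := lerP c 0.
  by have := H 1%N isT; rewrite divr1; lra.
rewrite leNgt; apply/negP => ba.
have gap0 : 0 < (a - b) / c by apply: divr_gt0; lra.
have [N [HN /ssrnat.ltP N0]] := archimed_cor1 _ (elimT (RltbP _ _) gap0).
rewrite INR_natr in HN.
have Nr0 : 0 < N%:R :> R by rewrite ltr0n.
have invN : N%:R^-1 < (a - b) / c.
  by rewrite (@RinvE N%:R) ?gt_eqF //; apply/RltbP.
have : c / N%:R < a - b by move: invN; rewrite ltr_pdivlMr // mulrC.
have := H N N0; lra.
Qed.

Lemma eq0_of_le_forall_pos (a b : R) : 0 <= a -> (forall s, 0 < s -> a <= s * b) -> a = 0.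
Proof.
move=> a0 H; apply/eqP; rewrite eq_le a0 andbT.
have [b0|b0] := lerP b 0; first by have := H 1 ltr01; lra.
rewrite leNgt; apply/negP => a_gt0.
have := H (a / (2 * b)) (divr_gt0 a_gt0 (mulr_gt0 (ltr0Sn _ 1) b0)).
have -> : a / (2 * b) * b = a / 2 by field; rewrite gt_eqF.
lra.
Qed.

Section InnerProduct.
Variable k : nat.
Implicit Types (u v w : 'cV[R]_k) (a : R).

Lemma dotvE u v : dotv u v = \sum_i u i 0 * v i 0.
Proof. by rewrite /dotv !mxE; apply: eq_bigr => i _; rewrite mxE. Qed.

Lemma dotvC u v : dotv u v = dotv v u.
Proof. by rewrite !dotvE; apply: eq_bigr => i _; rewrite mulrC. Qed.

Lemma dotvDl u v w : dotv (u + v) w = dotv u w + dotv v w.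
Proof. by rewrite !dotvE -big_split; apply: eq_bigr => i _; rewrite !mxE mulrDl. Qed.

Lemma dotvZl a u w : dotv (a *: u) w = a * dotv u w.
Proof. by rewrite !dotvE mulr_sumr; apply: eq_bigr => i _; rewrite !mxE mulrA. Qed.

Lemma dotvNl u w : dotv (- u) w = - dotv u w.
Proof. by rewrite -scaleN1r dotvZl mulN1r. Qed.

Lemma dotvBl u v w : dotv (u - v) w = dotv u w - dotv v w.
Proof. by rewrite dotvDl dotvNl. Qed.

Lemma dotvZr a u w : dotv w (a *: u) = a * dotv w u.
Proof. by rewrite !(dotvC w) dotvZl. Qed.

Lemma dotvNr u w : dotv w (- u) = - dotv w u.
Proof. by rewrite !(dotvC w) dotvNl. Qed.

Lemma dotvBr u v w : dotv w (u - v) = dotv w u - dotv w v.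
Proof. by rewrite !(dotvC w) dotvBl. Qed.

Lemma dotv0l u : dotv 0 u = 0.
Proof. by rewrite -(scale0r 0) dotvZl mul0r. Qed.

Lemma dotv0r u : dotv u 0 = 0.
Proof. by rewrite dotvC dotv0l. Qed.

Lemma dotvv_ge0 v : 0 <= dotv v v.
Proof. by rewrite dotvE; apply: sumr_ge0 => i _; rewrite -expr2 sqr_ge0. Qed.

Lemma dotvv_eq0 v : dotv v v = 0 -> v = 0.
Proof.
rewrite dotvE => /psumr_eq0P vv0; apply/matrixP => i j; rewrite (ord1 j) mxE.
have /eqP := vv0 (fun i _ => ltac:(by rewrite -expr2 sqr_ge0)) i isT.
by rewrite -expr2 sqrf_eq0 => /eqP.
Qed.

Lemma norm2E v : norm2 v = sqrt (dotv v v).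
Proof. by rewrite /norm2 dotvE; congr sqrt; apply: eq_bigr => i _; rewrite expr2. Qed.

Lemma norm2_ge0 v : 0 <= norm2 v.
Proof. exact: sqrt_ge0. Qed.

Lemma norm2_sq v : norm2 v ^+ 2 = dotv v v.
Proof. by rewrite norm2E sqrtK2 // dotvv_ge0. Qed.

Lemma norm2_eq0 v : norm2 v = 0 -> v = 0.
Proof. by rewrite norm2E => /sqrt_eq0 vv0; apply/dotvv_eq0/vv0/dotvv_ge0. Qed.

Lemma norm2_gt0 v : v != 0 -> 0 < norm2 v.
Proof. by move=> v0; rewrite lt_def norm2_ge0 andbT; apply: contraNneq v0 => /norm2_eq0 ->. Qed.

Lemma norm2_0 : norm2 (0 : 'cV[R]_k) = 0.
Proof. by rewrite norm2E dotv0l sqrt_0. Qed.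

Lemma norm2N v : norm2 (- v) = norm2 v.
Proof. by rewrite !norm2E dotvNl dotvNr opprK. Qed.

Lemma norm2Z a v : 0 <= a -> norm2 (a *: v) = a * norm2 v.
Proof.
move=> a0; rewrite norm2E dotvZl dotvZr mulrA -expr2 -norm2_sq -exprMn sqrt_sq //.
by rewrite mulr_ge0 ?norm2_ge0.
Qed.

(* Cauchy-Schwarz, from the nonnegativity of |(|v|) u - (|u|) v|^2. *)
Lemma cauchy_schwarz u v : dotv u v <= norm2 u * norm2 v.
Proof.
have [u0|u0] := eqVneq u 0; first by rewrite u0 dotv0l norm2_0 mul0r.
have [v0|v0] := eqVneq v 0; first by rewrite v0 dotv0r norm2_0 mulr0.
have a0 := norm2_gt0 u0; have b0 := norm2_gt0 v0.
have := dotvv_ge0 (norm2 v *: u - norm2 u *: v).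
rewrite !(dotvBl, dotvBr, dotvZl, dotvZr) -!norm2_sq (dotvC v u).
set a := norm2 u; set b := norm2 v; set c := dotv u v => H.
have : 0 <= a * b * (a * b - c) by rewrite !expr2 in H; lra.
by rewrite pmulr_rge0 ?mulr_gt0 // subr_ge0.
Qed.

End InnerProduct.

Lemma dotv_mul p q (M : 'M[R]_(p, q)) (u : 'cV[R]_p) (v : 'cV[R]_q) :
  dotv u (M *m v) = dotv (M^T *m u) v.
Proof. by rewrite /dotv trmx_mul trmxK mulmxA. Qed.

Section SmoothConvex.
Variables (k : nat) (f : 'cV[R]_k -> R) (g : 'cV[R]_k -> 'cV[R]_k) (mu : R).
Hypotheses (cvx_f : convex_fun f) (grad_g : is_gradient f g).

(* If it failed at (x, y), then along the segment from x to y the convexity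
   chord would eventually fall below the first-order expansion at x. *)
Lemma gradient_inequality x y : f x + dotv (g x) (y - x) <= f y.
Proof.
set h := y - x; have [h0|h_neq0] := eqVneq h 0.
  have -> : y = x by apply/eqP; rewrite -subr_eq0 -/h h0.
  by rewrite h0 dotv0r addr0.
have nh0 := norm2_gt0 h_neq0.
rewrite leNgt; apply/negP => H.
set gap := f x + dotv (g x) h - f y.
have gap0 : 0 < gap by rewrite /gap subr_gt0.
have eps0 : 0 < gap / (2 * norm2 h) by apply: divr_gt0 => //; nra.
have [delta [d0 hd]] := grad_g x eps0.
(* a step t along h, short enough for the first-order expansion *)
set t := Order.min 1 (delta / (2 * norm2 h)).
have t0 : 0 < t by rewrite lt_min ltr01 /=; apply: divr_gt0 => //; nra.
have t1 : t <= 1 by rewrite ge_min lexx.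
have tn : t * norm2 h < delta.
  have : t <= delta / (2 * norm2 h) by rewrite ge_min lexx orbT.
  by rewrite ler_pdivlMr; nra.
have := hd (t *: h); rewrite norm2Z; last exact: ltW.
move=> /(_ tn).
rewrite ler_norml dotvZr => /andP [expansion _].
have := cvx_f y x (ltW t0) t1.
have -> : t *: y + (1 - t) *: x = x + t *: h.
  by rewrite /h; apply/matrixP => i j; rewrite !mxE; ring.
have e : gap / (2 * norm2 h) * (t * norm2 h) = t * gap / 2.
  by field; apply/eqP; nra.
rewrite e /gap in expansion; rewrite /gap in gap0 => chord; nra.
Qed.

(* Every gradient value is in the domain of the Fenchel conjugate:
   w^T (g y) - f w <= y^T (g y) - f y by the gradient inequality at y. *)
Lemma gradient_in_dom_conj y : in_dom_conj f (g y).
Proof.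
exists (dotv y (g y) - f y) => w.
have := gradient_inequality y w.
by rewrite dotvBr (dotvC (g y) w) (dotvC (g y) y); lra.
Qed.

Hypothesis lip_g : lipschitz g mu.

Lemma lipschitz_nonpos_const x y : mu <= 0 -> g x = g y.
Proof.
move=> mu0; apply/eqP; rewrite -subr_eq0; apply/eqP/norm2_eq0/eqP.
rewrite eq_le norm2_ge0 andbT; apply: (le_trans (lip_g x y)).
by rewrite mulr_le0_ge0 ?norm2_ge0.
Qed.

(* One step of a discretised descent lemma along the segment x + [s, t] h:
   the gradient inequality at x + t h, plus the Lipschitz bound on
   g (x + t h) - g x. *)
Lemma descent_step x h s t : 0 <= s -> s <= t ->
  f (x + t *: h) <= f (x + s *: h) + (t - s) * (dotv (g x) h + mu * t * dotv h h).
Proof.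
move=> s0 st; have t0 : 0 <= t by apply: le_trans st.
set p := x + t *: h.
have := gradient_inequality p (x + s *: h).
have -> : x + s *: h - p = (- (t - s)) *: h.
  by rewrite /p; apply/matrixP => i j; rewrite !mxE; ring.
rewrite dotvZr mulNr => tangent.
have lipschitz_h : dotv (g p - g x) h <= mu * t * dotv h h.
  apply: (le_trans (cauchy_schwarz _ _)).
  have := lip_g p x; have -> : p - x = t *: h by rewrite /p addrC addKr.
  rewrite norm2Z // -norm2_sq expr2 mulrA mulrA => lip.
  by apply: ler_wpM2r; rewrite ?norm2_ge0 // -mulrA.
have : (t - s) * dotv (g p) h <= (t - s) * (dotv (g x) h + mu * t * dotv h h).
  by apply: ler_wpM2l; rewrite ?subr_ge0 // -lerBlDl -dotvBl.
lra.
Qed.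

(* Summing N descent steps of length 1/N from x to x + h. *)
Lemma descent_discrete x h (N : nat) : (0 < N)%N ->
  f (x + h) <= f x + dotv (g x) h + mu * dotv h h * (N%:R + 1) / (2 * N%:R).
Proof.
move=> N_gt0; have Nr0 : 0 < N%:R :> R by rewrite ltr0n.
set gh := dotv (g x) h; set hh := dotv h h.
have partial (j : nat) : f (x + (j%:R / N%:R) *: h)
    <= f x + j%:R / N%:R * gh + mu * hh * (j%:R * (j%:R + 1)) / (2 * N%:R ^+ 2).
  elim: j => [|j IH]; first by rewrite !(mul0r, scale0r, addr0, mulr0).
  have s0 : 0 <= j%:R / N%:R :> R by apply: divr_ge0; rewrite ?ler0n ?ltW.
  have st : j%:R / N%:R <= j.+1%:R / N%:R :> R by rewrite ler_pM2r ?invr_gt0 // ler_nat.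
  have := descent_step x h s0 st; rewrite -natr1.
  have -> : (j%:R + 1) / N%:R - j%:R / N%:R = N%:R^-1 :> R by field; rewrite gt_eqF.
  have e : mu * hh * (j%:R * (j%:R + 1)) / (2 * N%:R ^+ 2)
      + N%:R^-1 * (mu * ((j%:R + 1) / N%:R) * hh)
      = mu * hh * ((j%:R + 1) * (j%:R + 1 + 1)) / (2 * N%:R ^+ 2).
    by field; rewrite gt_eqF.
  have e' : j%:R / N%:R * gh + N%:R^-1 * gh = (j%:R + 1) / N%:R * gh.
    by field; rewrite gt_eqF.
  move=> step; rewrite -e -e'; rewrite mulrDr -/gh -/hh in step; lra.
have := partial N; rewrite divff ?gt_eqF // scale1r mul1r.
have -> // : mu * hh * (N%:R * (N%:R + 1)) / (2 * N%:R ^+ 2) = mu * hh * (N%:R + 1) / (2 * N%:R).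
by field; rewrite gt_eqF.
Qed.

Lemma descent x h : f (x + h) <= f x + dotv (g x) h + mu / 2 * dotv h h.
Proof.
pose c := mu / 2 * dotv h h; apply: (@le_of_forall_inv_nat _ _ c) => N N0.
have Nr0 : 0 < N%:R :> R by rewrite ltr0n.
have := descent_discrete x h N0.
have -> : mu * dotv h h * (N%:R + 1) / (2 * N%:R)
    = mu / 2 * dotv h h + mu / 2 * dotv h h / N%:R by field; rewrite gt_eqF.
by rewrite addrA.
Qed.

(* Combining the gradient inequality at x (tested at y - s G) with the descent
   lemma at y (step - s G), where G = g y - g x, for an arbitrary step s. *)
Lemma gradient_gap_bound x y s :
  f x - f y + dotv (g x) (y - x) + s * dotv (g y - g x) (g y - g x)
    <= mu * s ^+ 2 / 2 * dotv (g y - g x) (g y - g x).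
Proof.
set G := g y - g x.
have tangent := gradient_inequality x (y - s *: G).
have upper := descent y (- (s *: G)).
have e0 : y - s *: G - x = (y - x) - s *: G.
  by apply/matrixP => a b; rewrite !mxE; ring.
rewrite e0 dotvBr dotvZr in tangent.
rewrite dotvNr dotvZr dotvNl dotvNr dotvZl dotvZr opprK in upper.
have e : s * dotv (g y) G - s * dotv (g x) G = s * dotv G G by rewrite -mulrBr -dotvBl.
have e' : mu / 2 * (s * (s * dotv G G)) = mu * s ^+ 2 / 2 * dotv G G by rewrite expr2; field.
lra.
Qed.

(* Co-coercivity of the gradient of a convex function with mu-Lipschitz
   gradient: |g y - g x|^2 <= mu <g y - g x, y - x>; take s = 1/mu above for
   the pairs (x, y) and (y, x) and add. *)
Lemma cocoercive x y :
  dotv (g y - g x) (g y - g x) <= mu * dotv (g y - g x) (y - x).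
Proof.
have [mu0|mu0] := lerP mu 0.
  by rewrite (lipschitz_nonpos_const y x mu0) subrr !dotv0l mulr0.
have bound_xy := gradient_gap_bound x y mu^-1.
have := gradient_gap_bound y x mu^-1.
rewrite -(opprB (g y)) dotvNl dotvNr opprK.
set G := g y - g x in bound_xy *.
have e1 : dotv (g y) (x - y) = - dotv (g y) (y - x) by rewrite -dotvNr opprB.
have e2 : dotv (g x) (y - x) - dotv (g y) (y - x) = - dotv G (y - x).
  by rewrite -dotvBl -dotvNl opprB.
have e3 : mu * mu^-1 ^+ 2 / 2 = mu^-1 / 2 by rewrite expr2; field; rewrite gt_eqF.
rewrite e3 in bound_xy * => bound_yx.
have : mu^-1 * dotv G G <= dotv G (y - x) by lra.
by rewrite -(ler_pM2l mu0) mulrA divff ?gt_eqF // mul1r.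
Qed.

Definition reg_objective (q p : nat) (K : 'M[R]_(k, q)) (L : 'M[R]_(p, q)) (lam : R)
  (y : 'cV[R]_q) := f (K *m y) + lam / 2 * norm2 (L *m y) ^+ 2.

(* Quadratic upper model of the regularised objective along a direction c:
   descent lemma for f, exact expansion for the quadratic term. *)
Lemma reg_objective_step (q p : nat) (K : 'M[R]_(k, q)) (L : 'M[R]_(p, q)) lam y c s :
  reg_objective K L lam (y - s *: c) <= reg_objective K L lam y
    - s * dotv (K^T *m g (K *m y) + lam *: (L^T *m (L *m y))) c
    + s ^+ 2 * (mu / 2 * norm2 (K *m c) ^+ 2 + lam / 2 * norm2 (L *m c) ^+ 2).
Proof.
rewrite /reg_objective !mulmxBr -!scalemxAr !norm2_sq.
have := descent (K *m y) (- (s *: (K *m c))).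
rewrite !(dotvNr, dotvNl, dotvZr, dotvZl, opprK) dotv_mul => descent_K.
rewrite !(dotvBl, dotvBr, dotvZr, dotvZl, dotvDl) (dotvC (L *m c)) dotv_mul.
rewrite expr2; lra.
Qed.

(* First-order optimality for the regularised problem: at a minimiser y0 the
   gradient c vanishes, since moving by - s c lowers the objective by
   s |c|^2 up to O(s^2). *)
Lemma reg_objective_stationary (q p : nat) (K : 'M[R]_(k, q)) (L : 'M[R]_(p, q)) lam y0 :
  (forall y, reg_objective K L lam y0 <= reg_objective K L lam y) ->
  K^T *m g (K *m y0) + lam *: (L^T *m (L *m y0)) = 0.
Proof.
move=> y0_min; set c := _ + _; apply: dotvv_eq0.
pose B := mu / 2 * norm2 (K *m c) ^+ 2 + lam / 2 * norm2 (L *m c) ^+ 2.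
apply: (@eq0_of_le_forall_pos _ B (dotvv_ge0 c)) => s s0.
have := le_trans (y0_min (y0 - s *: c)) (reg_objective_step K L lam y0 c s).
rewrite -/c -/B expr2 => H; rewrite -(ler_pM2l s0); lra.
Qed.

End SmoothConvex.

Section Projection.

(* A matrix with zero Gram matrix B B^T is zero (its diagonal holds the squared
   row norms). *)
Lemma gram_eq0 p q (B : 'M[R]_(p, q)) : B *m B^T = 0 -> B = 0.
Proof.
move=> BBt0; apply/matrixP => i j.
have : (B *m B^T) i i = 0 by rewrite BBt0 mxE.
rewrite mxE => /psumr_eq0P sq0.
have /eqP := sq0 (fun l _ => ltac:(by rewrite mxE -expr2 sqr_ge0)) j isT.
by rewrite !mxE -expr2 sqrf_eq0 => /eqP.
Qed.

Lemma gram_unit r q (C : 'M[R]_(r, q)) : row_free C -> C *m C^T \in unitmx.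
Proof.
move=> C_free; rewrite -row_free_unit -kermx_eq0.
set Kk := kermx (C *m C^T).
have KkC : (Kk *m C) *m (Kk *m C)^T = 0.
  by rewrite trmx_mul !mulmxA -(mulmxA Kk) mulmx_ker mul0mx.
by rewrite -(mulmx_free_eq0 _ C_free) (gram_eq0 KkC).
Qed.

(* For a full-rank factorisation M = B C, the classical formula
   C^T (C C^T)^-1 (B^T B)^-1 B^T is a Moore-Penrose pseudoinverse. *)
Lemma pinv_exists_factor p q r (B : 'M[R]_(p, r)) (C : 'M[R]_(r, q)) :
  row_free B^T -> row_free C -> exists X, is_pinv (B *m C) X.
Proof.
move=> B_free C_free.
have uC := gram_unit C_free.
have uB := gram_unit B_free; rewrite trmxK in uB.
set GB := invmx (B^T *m B); set GC := invmx (C *m C^T).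
have GB_sym : GB^T = GB by rewrite /GB trmx_inv trmx_mul trmxK.
have GC_sym : GC^T = GC by rewrite /GC trmx_inv trmx_mul trmxK.
have GC_inv l (Y : 'M[R]_(l, _)) : Y *m C *m C^T *m GC = Y.
  by rewrite -(mulmxA Y C) -mulmxA mulmxV // mulmx1.
have GB_inv l (Y : 'M[R]_(l, _)) : Y *m GB *m B^T *m B = Y.
  by rewrite -mulmxA -mulmxA mulVmx // mulmx1.
exists (C^T *m GC *m GB *m B^T).
have MX : B *m C *m (C^T *m GC *m GB *m B^T) = B *m GB *m B^T by rewrite !mulmxA GC_inv.
have XM : C^T *m GC *m GB *m B^T *m (B *m C) = C^T *m GC *m C by rewrite !mulmxA GB_inv.
split.
- by rewrite MX !mulmxA GB_inv.
- by rewrite XM !mulmxA GC_inv.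
- by rewrite MX !trmx_mul trmxK GB_sym !mulmxA.
- by rewrite XM !trmx_mul trmxK GC_sym !mulmxA.
Qed.

(* [pinv M] is a Moore-Penrose pseudoinverse, via a rank factorisation of M. *)
Lemma pinv_spec p q (M : 'M[R]_(p, q)) : is_pinv M (pinv M).
Proof.
rewrite /pinv; apply: epsilon_spec.
have B_free : row_free (col_base M)^T.
  by rewrite /row_free mxrank_tr; exact: col_base_full.
by have := pinv_exists_factor B_free (row_base_free M); rewrite mulmx_base.
Qed.

(* A generalised inverse Y of the Gram matrix S^T S also satisfies
   S Y (S^T S) = S: the defect E has S^T E = 0, hence E^T E = 0. *)
Lemma gram_ginv d m (S : 'M[R]_(d, m)) (Y : 'M[R]_m) :
  (S^T *m S) *m Y *m (S^T *m S) = S^T *m S -> S *m Y *m (S^T *m S) = S.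
Proof.
move=> ginvY; apply/eqP; rewrite -subr_eq0; apply/eqP.
set E := S *m Y *m (S^T *m S) - S.
have StE : S^T *m E = 0.
  by move: ginvY; rewrite !mulmxA => ginvY; rewrite /E mulmxBr !mulmxA ginvY subrr.
apply: trmx_inj; rewrite trmx0; apply: gram_eq0; rewrite trmxK.
have EtS : E^T *m S = 0 by rewrite -[S]trmxK -trmx_mul StE trmx0.
by rewrite {2}/E mulmxBr !mulmxA EtS !mul0mx subrr.
Qed.

Variables (d m : nat) (S : 'M[R]_(d, m)).

Lemma projS_props :
  [/\ (projS S)^T = projS S, projS S *m projS S = projS S & projS S *m S = S].
Proof.
set M := S^T *m S; set Y := pinv M.
have [MYM _ _ _] := pinv_spec M; rewrite -/Y in MYM.
have M_sym : M^T = M by rewrite /M trmx_mul trmxK.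
have MYtM : M *m Y^T *m M = M by rewrite -{1}M_sym -{2}M_sym -!trmx_mul mulmxA MYM M_sym.
have MYSt : M *m Y *m S^T = S^T.
  by rewrite -{1}M_sym -(trmxK Y) -!trmx_mul mulmxA gram_ginv.
have PT : (projS S)^T = S *m Y^T *m S^T by rewrite /projS !trmx_mul trmxK !mulmxA.
have PTP : (projS S)^T *m projS S = (projS S)^T.
  rewrite PT /projS -/M -/Y !mulmxA -(mulmxA _ S^T S) -/M -(mulmxA _ M Y).
  by rewrite -(mulmxA _ (M *m Y) S^T) MYSt.
have P_sym : (projS S)^T = projS S.
  by apply/esym; rewrite -{1}(trmxK (projS S)) -PTP trmx_mul trmxK.
split => //; first by rewrite -{1}P_sym PTP P_sym.
by rewrite /projS -mulmxA gram_ginv.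
Qed.

Lemma projS_perp_sym : (projS_perp S)^T = projS_perp S.
Proof. by have [PT _ _] := projS_props; rewrite /projS_perp linearB /= trmx1 PT. Qed.

Lemma projS_perp_idem : (projS_perp S)^T *m projS_perp S = projS_perp S.
Proof.
have [_ PP _] := projS_props.
by rewrite projS_perp_sym /projS_perp mulmxBl !mul1mx mulmxBr mulmx1 PP subrr subr0.
Qed.

End Projection.

Section SketchConstant.
Variables (n d m : nat) (A : 'M[R]_(n, d)) (S : 'M[R]_(d, m)).

(* Each nonzero element of the set defining Z_f is the ratio
   |P_S^perp A^T Delta| / |Delta|, because P_S^perp is an orthogonal projector. *)
Lemma Zf_ratio (Delta : 'cV[R]_n) : Delta != 0 ->
  sqrt (((Delta^T *m A *m projS_perp S *m A^T *m Delta) 0 0) / norm2 Delta ^+ 2)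
  = norm2 (projS_perp S *m (A^T *m Delta)) / norm2 Delta.
Proof.
move=> Delta0; have t0 := norm2_gt0 Delta0.
set Q := projS_perp S; set u := A^T *m Delta.
have -> : (Delta^T *m A *m Q *m A^T *m Delta) 0 0 = norm2 (Q *m u) ^+ 2.
  rewrite norm2_sq dotv_mul mulmxA projS_perp_idem /dotv /u.
  by rewrite !trmx_mul trmxK projS_perp_sym -/Q !mulmxA.
rewrite -[X in sqrt X = _]/(norm2 (Q *m u) ^+ 2 * Rinv (norm2 Delta ^+ 2)) -RinvE.
  by rewrite -expr_div_n sqrt_sq // divr_ge0 ?norm2_ge0 // ltW.
by rewrite expf_neq0 // gt_eqF.
Qed.

Variables (f : 'cV[R]_n -> R) (zs : 'cV[R]_n) (Zf : R).
Hypothesis Zf_sup : is_sup (Zf_set f A S zs) Zf.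

Lemma Zf_ge0 : 0 <= Zf.
Proof. by case: Zf_sup => upper _; apply: upper; left. Qed.

Lemma Zf_bound (Delta : 'cV[R]_n) : in_dom_conj f (zs + Delta) ->
  norm2 (projS_perp S *m (A^T *m Delta)) <= Zf * norm2 Delta.
Proof.
move=> dom; have [->|Delta0] := eqVneq Delta 0.
  by rewrite !mulmx0 !norm2_0 mulr0.
case: Zf_sup => upper _; rewrite -ler_pdivrMr ?norm2_gt0 // -Zf_ratio //.
by apply: upper; right; exists Delta.
Qed.

Lemma Zf_le_spec_norm sn : is_sup (spec_norm_set (projS_perp S *m A^T)) sn -> Zf <= sn.
Proof.
case=> spec_upper _; case: Zf_sup => _ least; apply: least => r [->|[Delta [_ [Delta0 ->]]]].
  by apply: spec_upper; left.
by rewrite Zf_ratio //; apply: spec_upper; right; exists Delta; rewrite mulmxA.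
Qed.

End SketchConstant.

(* The scalar core of the final estimate, in the notation of the main proof:
   t = |Delta|, a = |P_S^perp u|, U = |u|, X = |x*|, D = <P_S^perp u, x*>.
   Young's inequality on mu Z_f t X absorbs the t^2 terms. *)
Lemma sketch_error_arith (lam mu Zf t a U X D : R) :
  0 < lam -> 0 < mu -> 0 <= a -> 0 <= t -> 0 <= X -> 2 * mu * Zf ^+ 2 <= lam ->
  t ^+ 2 <= mu * (lam^-1 * (a ^+ 2 - U ^+ 2) - D) ->
  - D <= a * X -> a <= Zf * t ->
  (lam^-1 * U) ^+ 2 <= mu / (2 * lam) * Zf ^+ 2 * X ^+ 2.
Proof.
move=> lam0 mu0 a0 t0 X0 lam_big coco DaX aZt.
have li0 : 0 < lam^-1 by rewrite invr_gt0.
have a2 : a ^+ 2 <= Zf ^+ 2 * t ^+ 2.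
  by rewrite -exprMn ler_sqr ?nnegrE // (le_trans a0 aZt).
have small : mu * Zf ^+ 2 * lam^-1 <= 1 / 2.
  have := ler_wpM2r (ltW li0) lam_big; rewrite mulfV ?gt_eqF //; lra.
have absorb : mu * lam^-1 * a ^+ 2 <= t ^+ 2 / 2.
  have : mu * lam^-1 * a ^+ 2 <= mu * lam^-1 * (Zf ^+ 2 * t ^+ 2).
    by apply: ler_wpM2l => //; rewrite mulr_ge0 // ltW.
  have := ler_wpM2r (sqr_ge0 t) small; lra.
have cross : mu * (a * X) <= mu * (Zf * t * X).
  by apply: ler_wpM2l; [exact: ltW | exact: ler_wpM2r].
have young : mu * (Zf * t * X) <= t ^+ 2 / 2 + mu ^+ 2 * Zf ^+ 2 * X ^+ 2 / 2.
  by have := sqr_ge0 (t - mu * Zf * X); rewrite !expr2; lra.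
have : mu * (lam^-1 * U ^+ 2) <= mu * (mu * Zf ^+ 2 * X ^+ 2 / 2).
  have := ler_wpM2l (ltW mu0) DaX; rewrite !expr2 in coco absorb young *; lra.
rewrite ler_pM2l // => U2.
have -> : mu / (2 * lam) * Zf ^+ 2 * X ^+ 2 = lam^-1 * (mu * Zf ^+ 2 * X ^+ 2 / 2).
  by field; rewrite gt_eqF.
by rewrite exprMn expr2 -mulrA; apply: ler_wpM2l => //; exact: ltW.
Qed.

Section SketchedRidge.
Variables (n d m : nat) (A : 'M[R]_(n, d)) (S : 'M[R]_(d, m)) (lam mu : R).
Variables (f : 'cV[R]_n -> R) (g : 'cV[R]_n -> 'cV[R]_n).
Hypotheses (lam0 : 0 < lam) (cvx_f : convex_fun f) (grad_g : is_gradient f g)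
  (lip_g : lipschitz g mu).

Lemma ridge_solution xstar :
  (forall x, f (A *m xstar) + lam / 2 * norm2 xstar ^+ 2
             <= f (A *m x) + lam / 2 * norm2 x ^+ 2) ->
  xstar = - lam^-1 *: (A^T *m g (A *m xstar)).
Proof.
move=> xstar_min.
have min1 y : reg_objective f A 1%:M lam xstar <= reg_objective f A 1%:M lam y.
  by rewrite /reg_objective !mul1mx.
have /eqP := reg_objective_stationary cvx_f grad_g lip_g min1.
rewrite trmx1 !mul1mx addrC addr_eq0 => /eqP stat.
by rewrite scaleNr -scalerN -stat scalerK ?gt_eqF.
Qed.
(* Stationarity of the sketched problem says S^T xtilde = S^T S alphastar,
   where xtilde = - A^T grad f (A S alphastar) / lam; projecting onto range(S)
   therefore recovers the sketched solution: P_S xtilde = S alphastar. *)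
Lemma sketched_projection alphastar :
  (forall alpha, f (A *m S *m alphastar) + lam / 2 * norm2 (S *m alphastar) ^+ 2
                 <= f (A *m S *m alpha) + lam / 2 * norm2 (S *m alpha) ^+ 2) ->
  projS S *m (- lam^-1 *: (A^T *m g (A *m S *m alphastar))) = S *m alphastar.
Proof.
move=> alpha_min.
have /eqP := reg_objective_stationary cvx_f grad_g lip_g alpha_min.
rewrite addr_eq0 trmx_mul => /eqP stat.
have StX : S^T *m (- lam^-1 *: (A^T *m g (A *m S *m alphastar))) = S^T *m (S *m alphastar).
  by rewrite -scalemxAr [S^T *m (A^T *m _)]mulmxA stat scaleNr scalerN opprK scalerK ?gt_eqF.
have [_ _ PS] := projS_props S.
by rewrite /projS -mulmxA StX !mulmxA -/(projS S) PS.
Qed.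

Lemma sketch_error xstar alphastar :
  (forall x, f (A *m xstar) + lam / 2 * norm2 xstar ^+ 2
             <= f (A *m x) + lam / 2 * norm2 x ^+ 2) ->
  - lam^-1 *: (A^T *m g (A *m S *m alphastar)) - xstar
    = - lam^-1 *: (A^T *m (g (A *m S *m alphastar) - g (A *m xstar))).
Proof. by move=> xstar_min; rewrite {1}(ridge_solution xstar_min) mulmxBr scalerBr. Qed.

(* Co-coercivity of grad f between A xstar and A S alphastar, rewritten with
   both optimality conditions.  With Delta the gradient gap, u = A^T Delta and
   Q = P_S^perp, the sketched point splits as
   S alphastar - xstar = P_S (xtilde - xstar) - Q xstar with xtilde - xstar = - u / lam. *)
Lemma sketch_cocoercive xstar alphastar (u : 'cV[R]_d) :
  (forall x, f (A *m xstar) + lam / 2 * norm2 xstar ^+ 2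
             <= f (A *m x) + lam / 2 * norm2 x ^+ 2) ->
  (forall alpha, f (A *m S *m alphastar) + lam / 2 * norm2 (S *m alphastar) ^+ 2
                 <= f (A *m S *m alpha) + lam / 2 * norm2 (S *m alpha) ^+ 2) ->
  u = A^T *m (g (A *m S *m alphastar) - g (A *m xstar)) ->
  norm2 (g (A *m S *m alphastar) - g (A *m xstar)) ^+ 2
    <= mu * (lam^-1 * (norm2 (projS_perp S *m u) ^+ 2 - norm2 u ^+ 2)
             - dotv (projS_perp S *m u) xstar).
Proof.
move=> xstar_min alpha_min uE.
set Q := projS_perp S; set xtilde := - lam^-1 *: (A^T *m g (A *m S *m alphastar)).
have PQ : projS S = 1%:M - Q by rewrite /Q /projS_perp opprB addrC subrK.
have err : xtilde - xstar = - lam^-1 *: u by rewrite uE sketch_error.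
have sketch_split : S *m alphastar - xstar = projS S *m (xtilde - xstar) - Q *m xstar.
  rewrite -(sketched_projection alpha_min) -/xtilde mulmxBr -addrA; congr (_ + _).
  by rewrite PQ mulmxBl mul1mx opprB addrAC subrr add0r.
have := cocoercive cvx_f grad_g lip_g (A *m xstar) (A *m S *m alphastar).
set Delta := g _ - g _; rewrite -norm2_sq -mulmxA -mulmxBr dotv_mul -uE sketch_split err.
rewrite -scalemxAr dotvBr dotvZr.
rewrite PQ mulmxBl mul1mx dotvBr [dotv u (Q *m xstar)]dotv_mul projS_perp_sym -/Q.
have uQu : dotv u (Q *m u) = norm2 (Q *m u) ^+ 2.
  by rewrite norm2_sq [RHS]dotv_mul mulmxA projS_perp_idem dotvC.
by rewrite uQu -norm2_sq; lra.
Qed.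

End SketchedRidge.

Theorem theorem1 (n d m : nat) (A : 'M[R]_(n, d)) (S : 'M[R]_(d, m)) (lam mu : R)
  (f : 'cV[R]_n -> R) (gradf : 'cV[R]_n -> 'cV[R]_n)
  (xstar : 'cV[R]_d) (alphastar : 'cV[R]_m) (Zf specnorm : R) :
  0 < lam ->
  convex_fun f ->
  is_gradient f gradf ->
  lipschitz gradf mu ->
  (forall x : 'cV[R]_d,
     f (A *m xstar) + lam / 2 * norm2 xstar ^+ 2 <= f (A *m x) + lam / 2 * norm2 x ^+ 2) ->
  (forall alpha : 'cV[R]_m,
     f (A *m S *m alphastar) + lam / 2 * norm2 (S *m alphastar) ^+ 2
       <= f (A *m S *m alpha) + lam / 2 * norm2 (S *m alpha) ^+ 2) ->
  is_sup (Zf_set f A S (gradf (A *m xstar))) Zf ->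
  is_sup (spec_norm_set (projS_perp S *m A^T)) specnorm ->
  2 * mu * Zf ^+ 2 <= lam ->
  let xtilde := - lam^-1 *: (A^T *m gradf (A *m S *m alphastar)) in
  norm2 (xtilde - xstar) <= sqrt (mu / (2 * lam)) * Zf * norm2 xstar /\
  norm2 (xtilde - xstar) <= sqrt (mu / (2 * lam)) * specnorm * norm2 xstar.
Proof.
move=> lam0 cvx_f grad_g lip_g xstar_min alpha_min Zf_sup spec_sup lam_big xtilde.
have Zf0 := Zf_ge0 Zf_sup; have X0 := norm2_ge0 xstar.
have bound0 : 0 <= sqrt (mu / (2 * lam)) * Zf * norm2 xstar by rewrite !mulr_ge0 ?sqrt_ge0.
suff bound : norm2 (xtilde - xstar) <= sqrt (mu / (2 * lam)) * Zf * norm2 xstar.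
  split => //; apply: (le_trans bound); apply: ler_wpM2r => //.
  by apply: ler_wpM2l; [exact: sqrt_ge0 | by have := Zf_le_spec_norm Zf_sup spec_sup].
rewrite /xtilde (sketch_error S lam0 cvx_f grad_g lip_g alphastar xstar_min).
set Delta := gradf _ - gradf _; set u := A^T *m Delta.
rewrite scaleNr norm2N norm2Z; last by rewrite invr_ge0 ltW.
have [mu0|mu0] := lerP mu 0.
  (* a constant gradient makes Delta, hence the error, vanish *)
  rewrite /u /Delta (lipschitz_nonpos_const lip_g _ (A *m xstar) mu0).
  by rewrite subrr mulmx0 norm2_0 mulr0.
have err0 : 0 <= lam^-1 * norm2 u by rewrite mulr_ge0 ?norm2_ge0 // invr_ge0 ltW.
rewrite -ler_sqr ?nnegrE //.
set Qu := projS_perp S *m u.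
have coco := sketch_cocoercive lam0 cvx_f grad_g lip_g xstar_min alpha_min (erefl u).
have cross : - dotv Qu xstar <= norm2 Qu * norm2 xstar.
  by rewrite -dotvNl -(norm2N Qu) cauchy_schwarz.
have Qu_le : norm2 Qu <= Zf * norm2 Delta.
  by apply: (Zf_bound Zf_sup); rewrite /Delta addrC subrK; exact: gradient_in_dom_conj.
apply: le_trans (sketch_error_arith lam0 mu0 (norm2_ge0 _) (norm2_ge0 _) X0 lam_big
  coco cross Qu_le) _.
by rewrite !exprMn sqrt_ratio_sq // ltW.
Qed.
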